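(* Let $X$ be a Banach space, $T$ a nonempty index set, and $f_t:X\to\mathbb{R}\cup\{+\infty\}$ $(t\in T)$ functions that are lower semicontinuous with respect to the weak topology of $X$. Suppose that either all $f_t$ $(t\in T)$ are nonnegative, or $T$ is finite. Then the collection $\{f_t\}_{t\in T}$ is uniformly lower semicontinuous on every weakly compact subset $U$ of $X$, i.e., $\inf_{x\in U}\big(\overline{\sum_{t\in T}}f_t\big)(x)\le \Lambda_U(\{f_t\}_{t\in T})$.
   Context: Let $\mathcal{F}(T)$ be the family of finite subsets of $T$, directed by inclusion. For a net $\{\alpha_S\}_{S\in\mathcal{F}(T)}\subset[-\infty,+\infty]$: $\limsup_{S\uparrow T,|S|<\infty}\alpha_S:=\inf_{S_0\in\mathcal{F}(T)}\sup_{S\in\mathcal{F}(T),S_0\subset S}\alpha_S$ and $\liminf_{S\uparrow T,|S|<\infty}\alpha_S:=\sup_{S_0\in\mathcal{F}(T)}\inf_{S\in\mathcal{F}(T),S_0\subset S}\alpha_S$. The infinite sum is $\big(\overline{\sum_{t\in T}} f_t\big)(x):=\limsup_{S\uparrow T,|S|<\infty}\sum_{t\in S}f_t(x)$. For $U\subset X$, the uniform infimum is $\Lambda_U(\{f_t\}_{t\in T}):=\liminf_{S\uparrow T,|S|<\infty}\ \liminf_{\operatorname{diam}\{x_t\}_{t\in S}\to 0,\ x_t\in U\,(t\in S)}\ \sum_{t\in S}f_t(x_t)$, where the inner lower limit equals $\lim_{\delta\downarrow0}\inf\{\sum_{t\in S}f_t(x_t): x_t\in U\ (t\in S),\ \operatorname{diam}\{x_t\}_{t\in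 S}<\delta\}$ and $\operatorname{diam} A=\sup_{a,b\in A}\|a-b\|$. The collection is called uniformly lower semicontinuous on $U$ if $\inf_U\overline{\sum_{t\in T}}f_t\le\Lambda_U(\{f_t\}_{t\in T})$. Convention: $\inf\emptyset=+\infty$. *)

From HB Require Import structures.
From mathcomp Require Import all_boot all_order all_algebra.
From mathcomp Require Import all_classical all_reals all_analysis.
Set Implicit Arguments. Unset Strict Implicit. Unset Printing Implicit Defensive.
Import Order.TTheory GRing.Theory Num.Theory.
Import numFieldNormedType.Exports.
Local Open Scope classical_set_scope.
Local Open Scope ring_scope.

Section Defs.
Context {R : realType} {X : normedModType R}.

Definition dual_elt (phi : X -> R) : Prop :=
  (forall x y, phi (x + y) = phi x + phi y) /\
  (forall (a : R) x, phi (a *: x) = a * phi x) /\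
  continuous phi.

(* open sets of the weak topology sigma(X, dual X), via its standard base *)
Definition weakly_open (V : set X) : Prop :=
  forall x, V x -> exists (n : nat) (phi : 'I_n -> X -> R) (e : R),
    [/\ (forall i, dual_elt (phi i)), 0 < e &
        [set y | forall i, `|phi i y - phi i x| < e] `<=` V].

Definition weakly_compact (K : set X) : Prop :=
  forall (I : Type) (G : I -> set X),
    (forall i, weakly_open (G i)) -> K `<=` \bigcup_i G i ->
    exists (n : nat) (g : 'I_n -> I), K `<=` \bigcup_j G (g j).

Definition weakly_lsc (f : X -> \bar R) : Prop :=
  forall c : R, weakly_open [set y | (c%:E < f y)%E].

Definition diam (A : set X) : \bar R :=
  ereal_sup [set (`|a - b|)%:E | a in A & b in A].
End Defs.

Section Nets.
Context {R : realType} {T : choiceType}.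

(* limsup / liminf of a net indexed by finite subsets of T directed by inclusion *)
Definition fin_limsup (a : set T -> \bar R) : \bar R :=
  ereal_inf [set ereal_sup [set a S | S in [set S | finite_set S /\ S0 `<=` S]]
            | S0 in [set S0 : set T | finite_set S0]].

Definition fin_liminf (a : set T -> \bar R) : \bar R :=
  ereal_sup [set ereal_inf [set a S | S in [set S | finite_set S /\ S0 `<=` S]]
            | S0 in [set S0 : set T | finite_set S0]].
End Nets.

Section Sums.
Context {R : realType} {X : normedModType R} {T : choiceType}.
Variable f : T -> X -> \bar R.

Definition infsum (x : X) : \bar R :=
  fin_limsup (fun S : set T => (\sum_(t \in S) f t x)%E).

(* lim_{delta -> 0+} inf { sum_{t in S} f_t(x_t) : x_t in U, diam {x_t} < delta };
   the inner infimum is nonincreasing in delta, so the limit is the supremum over delta > 0 *)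
Definition inner_liminf (U : set X) (S : set T) : \bar R :=
  ereal_sup [set ereal_inf
      [set (\sum_(t \in S) f t (xs t))%E
       | xs in [set xs : T -> X | (forall t, S t -> U (xs t)) /\
                                   (diam (xs @` S) < delta%:E)%E]]
    | delta in [set delta : R | 0 < delta]].

Definition Lambda (U : set X) : \bar R := fin_liminf (inner_liminf U).

Definition uniformly_lsc (U : set X) : Prop :=
  (ereal_inf [set infsum x | x in U] <= Lambda U)%E.
End Sums.

From HB Require Import structures.
From mathcomp Require Import all_boot all_order all_algebra.
From mathcomp Require Import all_classical all_reals all_analysis.
From mathcomp Require Import lra.
Set Implicit Arguments. Unset Strict Implicit. Unset Printing Implicit Defensive.
Import Order.TTheory GRing.Theory Num.Theory.
Import numFieldNormedType.Exports.
Local Open Scope classical_set_scope.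
Local Open Scope ring_scope.

(* A finite partial sum is lower semicontinuous jointly in its arguments:
   if c < sum_(t in S) f_t(x), there is a weak neighbourhood N of x with
   c < sum_(t in S) f_t(y_t) whenever every y_t lies in N.  Each weak
   neighbourhood contains the norm-thickening of a smaller weak neighbourhood,
   so for c < inf_U sum_S weak compactness of U provides one norm radius eta
   serving all of U: every family in U of diameter < eta has sum > c.  Hence
   inf_U sum_S <= the inner lower limit for every finite nonempty S, which is
   the claim when T is finite.  When
   the f_t are nonnegative the partial sums increase with S; if Lambda_U < c,
   every finite partial sum is < c somewhere on U, and weak compactness (the
   sets {sum_S > c} being weakly open) yields one x in U at which all of them
   are <= c, so the upper sum at x is <= c. *)

Section WeakNeighbourhoods.
Context {R : realType} {X : normedModType R}.

Lemma dual_eltB (phi : X -> R) (a b : X) : dual_elt phi -> phi (a - b) = phi a - phi b.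
Proof. by move=> [phiD _]; apply/eqP; rewrite eq_sym subr_eq -phiD subrK. Qed.

Lemma dual_elt0 (phi : X -> R) : dual_elt phi -> phi 0 = 0.
Proof. by move=> dphi; rewrite -(subrr 0) dual_eltB // subrr. Qed.

Lemma dual_elts_small_near0 n (phi : 'I_n -> X -> R) (e : R) :
  (forall i, dual_elt (phi i)) -> 0 < e ->
  exists2 eta, 0 < eta & forall z, `|z| < eta -> forall i, `|phi i z| < e.
Proof.
move=> dphi e0; apply/nbhs_norm0P; apply: filter_forall => i.
have [_ [_ /(_ 0)]] := dphi i.
by rewrite /continuous_at (dual_elt0 (dphi i)) => /cvgr0Pnorm_lt; apply.
Qed.

Definition weak_ball n (phi : 'I_n -> X -> R) (x : X) (e : R) : set X :=
  [set y | forall i, `|phi i y - phi i x| < e].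

Definition weak_nbhs (x : X) (N : set X) : Prop :=
  exists n (phi : 'I_n -> X -> R) (e : R),
    [/\ forall i, dual_elt (phi i), 0 < e & weak_ball phi x e `<=` N].

Lemma weak_nbhsT x : weak_nbhs x setT.
Proof. by exists 0%N, (fun _ _ => 0), 1; split => // -[]. Qed.

Lemma weak_nbhsS x (A B : set X) : A `<=` B -> weak_nbhs x A -> weak_nbhs x B.
Proof.
by move=> AB [n [phi [e [dphi e0 sA]]]]; exists n, phi, e; split => // y /sA /AB.
Qed.

Lemma weak_nbhsI x (A B : set X) :
  weak_nbhs x A -> weak_nbhs x B -> weak_nbhs x (A `&` B).
Proof.
move=> [n [phi [e [dphi e0 sA]]]] [m [psi [d [dpsi d0 sB]]]].
exists (n + m)%N, (fun i : 'I_(n + m) =>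
  match fintype.split i with inl j => phi j | inr j => psi j end), (Num.min e d).
split => [i|| y yB]; first by case: fintype.split.
  by rewrite lt_min e0 d0.
split.
- apply: sA => i; have := yB (lshift m i).
  by rewrite (unsplitK (inl _ i)) lt_min => /andP[].
- apply: sB => i; have := yB (rshift n i).
  by rewrite (unsplitK (inr _ i)) lt_min => /andP[].
Qed.

Lemma weak_ball_open n (phi : 'I_n -> X -> R) x e :
  (forall i, dual_elt (phi i)) -> weakly_open (weak_ball phi x e).
Proof.
move=> dphi y yB; pose r := \big[Num.min/1]_i (e - `|phi i y - phi i x|).
exists n, phi, r; split => // [|z zB i].
  by apply: lt_bigmin => // i _; rewrite subr_gt0.
have := zB i; have : r <= e - `|phi i y - phi i x| by exact: bigmin_le.
have := ler_distD (phi i y) (phi i z) (phi i x); lra.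
Qed.

Lemma weak_nbhs_uniform x N : weak_nbhs x N ->
  exists W eta, [/\ weakly_open W, W x, 0 < eta &
                    forall y z, W y -> `|z - y| < eta -> N z].
Proof.
move=> [n [phi [e [dphi e0 sN]]]].
have e20 : 0 < e / 2 by rewrite divr_gt0.
have [eta eta0 small] := dual_elts_small_near0 dphi e20.
exists (weak_ball phi x (e / 2)), eta; split => //.
- exact: weak_ball_open.
- by move=> i; rewrite subrr normr0.
move=> y z yB zy; apply: sN => i; have := small _ zy i; rewrite dual_eltB //.
have := yB i; have := ler_distD (phi i y) (phi i z) (phi i x); lra.
Qed.

Lemma diam_ge (A : set X) a b : A a -> A b -> ((`|a - b|)%:E <= diam A)%E.
Proof. by move=> Aa Ab; apply: ereal_sup_ubound; exists a => //; exists b. Qed.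

End WeakNeighbourhoods.

Section ExtendedReals.
Context {R : realType}.
Local Open Scope ereal_scope.

Lemma lee_fin_ltP (x y : \bar R) :
  reflect (forall r : R, r%:E < x -> r%:E <= y) (x <= y).
Proof.
apply: (iffP idP) => [xy r /lt_le_trans/(_ xy)/ltW // |].
case: x => [r| |] xy; last exact: leNye.
- apply/lee_subgt0Pr => e e0; rewrite -EFinB; apply: xy.
  by rewrite lte_fin ltrBlDr ltrDl.
- by rewrite [y]eq_infty // => r; apply: xy; rewrite ltry.
Qed.

Lemma lte_adde_split (u v : \bar R) (c : R) : c%:E < u + v ->
  exists a b : R, [/\ a%:E < u, b%:E < v & c = (a + b)%R].
Proof.
case: u => [r| |]; case: v => [s| |] //= uv; rewrite ?lte_fin ?ltNge ?leNye // in uv.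
- exists (r - (r + s - c) / 2)%R, (s - (r + s - c) / 2)%R; rewrite !lte_fin; split; lra.
- by exists (r - 1)%R, (c - r + 1)%R; rewrite lte_fin ltry; split => //; lra.
- by exists (c - s + 1)%R, (s - 1)%R; rewrite lte_fin ltry; split => //; lra.
- by exists 0%R, c; rewrite !ltry add0r.
Qed.

End ExtendedReals.

Section FiniteSubsetNets.
Context {R : realType} {T : choiceType}.
Implicit Types (a : set T -> \bar R) (S : set T).
Local Open Scope ereal_scope.

Lemma fin_limsup_le a (c : \bar R) :
  (forall S, finite_set S -> a S <= c) -> fin_limsup a <= c.
Proof.
move=> ac; apply: ge_ereal_inf.
exists (ereal_sup [set a S | S in [set S | finite_set S /\ set0 `<=` S]]).
  by exists set0 => //; exact: finite_set0.
by apply: ge_ereal_sup => _ [S [fS _] <-]; exact: ac.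
Qed.

Lemma fin_liminf_lt a (c : \bar R) S0 : fin_liminf a < c -> finite_set S0 ->
  exists2 S, finite_set S /\ S0 `<=` S & a S < c.
Proof.
move=> ac fS0.
have : ereal_inf [set a S | S in [set S | finite_set S /\ S0 `<=` S]] < c.
  by apply: le_lt_trans ac; apply: ereal_sup_ubound; exists S0.
by move=> /ereal_inf_lt[_ [S SS0 <-]]; exists S.
Qed.

Lemma fin_limsup_finite a : finite_set [set: T] -> fin_limsup a = a setT.
Proof.
move=> fT; apply/le_anti/andP; split.
  apply: ge_ereal_inf.
  exists (ereal_sup [set a S | S in [set S | finite_set S /\ setT `<=` S]]).
    by exists setT.
  by apply: ge_ereal_sup => _ [S [_ +] <-]; rewrite subTset => ->.
apply: le_ereal_inf_tmp => _ [S0 _ <-].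
by apply: ereal_sup_ubound; exists setT.
Qed.

Lemma fin_liminf_finite a : finite_set [set: T] -> fin_liminf a = a setT.
Proof.
move=> fT; apply/le_anti/andP; split.
  apply: ge_ereal_sup => _ [S0 _ <-].
  by apply: ereal_inf_lbound; exists setT.
apply: le_ereal_sup_tmp.
exists (ereal_inf [set a S | S in [set S | finite_set S /\ setT `<=` S]]).
  by exists setT.
by apply: le_ereal_inf_tmp => _ [S [_ +] <-]; rewrite subTset => ->.
Qed.

End FiniteSubsetNets.

Section WeaklyLscSums.
Context {R : realType} {X : normedModType R} {T : choiceType}.
Variable f : T -> X -> \bar R.
Hypothesis f_lsc : forall t, weakly_lsc (f t).
Local Open Scope ereal_scope.

Lemma weak_nbhs_sum_gt (s : seq T) (c : R) x : c%:E < \sum_(t <- s) f t x ->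
  exists2 N, weak_nbhs x N &
    forall ys : T -> X, (forall t, t \in s -> N (ys t)) ->
      c%:E < \sum_(t <- s) f t (ys t).
Proof.
elim: s c => [|t0 s IH] c.
  rewrite big_nil => c0; exists setT => [|ys _]; first exact: weak_nbhsT.
  by rewrite big_nil.
rewrite big_cons => /lte_adde_split[a [b [aft0 bs ->]]].
have [N Nx Ns] := IH b bs.
exists ([set y | a%:E < f t0 y] `&` N); first exact: weak_nbhsI (f_lsc aft0) Nx.
move=> ys ysN; rewrite big_cons EFinD; apply: lteD.
  by have [] := ysN t0 (mem_head _ _).
by apply: Ns => t ts; have [] := ysN t; rewrite // inE ts orbT.
Qed.

Lemma weak_nbhs_fsum_gt (S : set T) (c : R) x : finite_set S ->
  c%:E < \sum_(t \in S) f t x ->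
  exists2 N, weak_nbhs x N &
    forall ys : T -> X, (forall t, S t -> N (ys t)) -> c%:E < \sum_(t \in S) f t (ys t).
Proof.
move=> fS; rewrite fsbig_finite // => /weak_nbhs_sum_gt[N Nx Ns].
exists N => // ys ysN; rewrite fsbig_finite //; apply: Ns => t.
by rewrite in_fset_set // inE; exact: ysN.
Qed.

Lemma weakly_open_fsum_gt (S : set T) (c : R) : finite_set S ->
  weakly_open [set y | c%:E < \sum_(t \in S) f t y].
Proof.
move=> fS x /(weak_nbhs_fsum_gt fS)[N Nx Ns]; apply: weak_nbhsS Nx => y Ny.
exact: (Ns (fun=> y)).
Qed.

Lemma ereal_inf_fsum_le_inner_liminf (U : set X) (S : set T) :
  weakly_compact U -> finite_set S -> S !=set0 ->
  ereal_inf [set \sum_(t \in S) f t x | x in U] <= inner_liminf f U S.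
Proof.
move=> cU fS [t0 St0]; apply/lee_fin_ltP => c c_lt.
have /choice[WE WE_spec] (x : {x | U x}) : exists WE : set X * R,
    [/\ weakly_open WE.1, WE.1 (sval x), (0 < WE.2)%R &
        forall y (ys : T -> X), WE.1 y -> (forall t, S t -> `|ys t - y| < WE.2)%R ->
          c%:E < \sum_(t \in S) f t (ys t)].
  have : c%:E < \sum_(t \in S) f t (sval x).
    apply: lt_le_trans c_lt _; apply: ereal_inf_lbound.
    by exists (sval x) => //; exact: svalP.
  move=> /(weak_nbhs_fsum_gt fS)[N /weak_nbhs_uniform[W [eta [Wo Wx eta0 WN]]] Ns].
  by exists (W, eta); split => // y ys Wy ysy; apply: Ns => t St; exact: WN (ysy t St).
have [k [g Ucover]] : exists k (g : 'I_k -> {x | U x}), U `<=` \bigcup_j (WE (g j)).1.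
  apply: (cU _ (fun x => (WE x).1)) => [x | x Ux]; first by have [] := WE_spec x.
  by exists (exist _ x Ux) => //; have [] := WE_spec (exist _ x Ux).
(* a norm Lebesgue number of the finite subcover *)
pose eta := \big[Num.min/1%R]_j (WE (g j)).2.
have eta0 : (0 < eta)%R by apply: lt_bigmin => // j _; have [] := WE_spec (g j).
apply: le_ereal_sup_tmp; eexists; first by exists eta.
apply: le_ereal_inf_tmp => _ [xs [xsU xs_diam] <-].
have [j _ Wxs] := Ucover _ (xsU t0 St0).
have [_ _ _ WEsum] := WE_spec (g j); apply/ltW/(WEsum _ _ Wxs) => t St.
have : (eta <= (WE (g j)).2)%R by exact: bigmin_le.
have : ((`|xs t - xs t0|)%:E <= diam (xs @` S)) by apply: diam_ge; exact: imageP.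
by move=> /le_lt_trans /(_ xs_diam); rewrite lte_fin; apply: lt_le_trans.
Qed.

Section Nonnegative.
Hypothesis f_ge0 : forall t x, 0 <= f t x.

Lemma lee_fsum_subset (A B : set T) x : finite_set A -> finite_set B -> A `<=` B ->
  \sum_(t \in A) f t x <= \sum_(t \in B) f t x.
Proof.
by move=> fA fB AB; apply: lee_fsum_nneg_subset => // t; rewrite !in_setE; exact: AB.
Qed.

Lemma fsum_lt_of_Lambda_lt (U : set X) (c : R) (S0 : set T) :
  weakly_compact U -> [set: T] !=set0 -> Lambda f U < c%:E -> finite_set S0 ->
  exists2 x, U x & \sum_(t \in S0) f t x < c%:E.
Proof.
move=> cU [t0 _] Lc fS0.
have fS1 : finite_set (t0 |` S0) by rewrite finite_setU; split; [exact: finite_set1|].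
have [S [fS S1S] Sc] := fin_liminf_lt Lc fS1.
have Sn0 : S !=set0 by exists t0; apply: S1S; left.
have := le_lt_trans (ereal_inf_fsum_le_inner_liminf cU fS Sn0) Sc.
move=> /ereal_inf_lt[_ [x Ux <-] Sx].
exists x => //; apply: le_lt_trans Sx; apply: lee_fsum_subset => // t S0t.
by apply: S1S; right.
Qed.

Lemma weakly_compact_fsum_le (U : set X) (c : R) : weakly_compact U ->
  (forall S, finite_set S -> exists2 x, U x & \sum_(t \in S) f t x < c%:E) ->
  exists2 x, U x & forall S, finite_set S -> \sum_(t \in S) f t x <= c%:E.
Proof.
move=> cU small; apply: contrapT => /forall2NP big.
pose G (S : {S : set T | finite_set S}) := [set y | c%:E < \sum_(t \in sval S) f t y].
have [k [g Ucover]] : exists k (g : 'I_k -> _), U `<=` \bigcup_j G (g j).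
  apply: (cU _ G) => [[S fS] | x Ux]; first exact: weakly_open_fsum_gt.
  have [//|] := big x; move=> /existsNP[S /not_implyP[fS /negP]].
  by rewrite -ltNge => Sx; exists (exist _ S fS).
pose Sk := \bigcup_(j in [set: 'I_k]) sval (g j).
have fSk : finite_set Sk by apply: bigcup_finite => // j _; exact: svalP.
have [x Ux Skx] := small Sk fSk.
have [j _ Gjx] := Ucover x Ux.
have : \sum_(t \in sval (g j)) f t x <= \sum_(t \in Sk) f t x.
  by apply: lee_fsum_subset => // [|t gjt]; [exact: svalP | exists j].
by move=> /(lt_le_trans Gjx) /lt_trans /(_ Skx); rewrite ltxx.
Qed.

Lemma uniformly_lsc_nneg (U : set X) :
  weakly_compact U -> [set: T] !=set0 -> uniformly_lsc f U.
Proof.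
move=> cU T0; apply/lee_fin_ltP => c c_lt; rewrite leNgt; apply/negP => Lc.
have [x Ux xS] := weakly_compact_fsum_le cU (fun S => fsum_lt_of_Lambda_lt cU T0 Lc).
have : infsum f x <= c%:E by exact: fin_limsup_le.
apply/negP; rewrite -ltNge; apply: lt_le_trans c_lt _.
by apply: ereal_inf_lbound; exists x.
Qed.

End Nonnegative.

Lemma uniformly_lsc_finite (U : set X) :
  weakly_compact U -> [set: T] !=set0 -> finite_set [set: T] -> uniformly_lsc f U.
Proof.
move=> cU T0 fT; rewrite /uniformly_lsc /Lambda fin_liminf_finite //.
have -> : infsum f = fun x => \sum_(t \in [set: T]) f t x.
  by apply/funext => x; exact: fin_limsup_finite.
exact: ereal_inf_fsum_le_inner_liminf.
Qed.

End WeaklyLscSums.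

Theorem proposition2p3 (R : realType) (X : completeNormedModType R)
  (T : choiceType) (f : T -> X -> \bar R) :
  [set: T] !=set0 ->
  (forall t x, f t x != -oo%E) ->
  (forall t, weakly_lsc (f t)) ->
  ((forall t x, (0 <= f t x)%E) \/ finite_set [set: T]) ->
  forall U : set X, weakly_compact U -> uniformly_lsc f U.
Proof.
move=> T0 _ f_lsc [f_ge0 | fT] U cU.
- exact: uniformly_lsc_nneg.
- exact: uniformly_lsc_finite.
Qed.
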